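(* Let $h:\mathbb{R}\to\mathbb{R}$ be continuous and let $u_1,u_2$ be any pair of real-valued linearly independent solutions of $u''(x)+h(x)u(x)=0$, with Wronskian $W=u'_1(x)u_2(x)-u_1(x)u'_2(x)\neq0$. Let $X_0\in\mathbb{R}$ and fix either choice of sign $\pm$. Then the map $(x,\varPhi)\mapsto(X,Y)$ given by \[ X(x,\varPhi)=X_0\pm W^{-1}\frac{\varPhi^2u_1(x)u_2(x)+u'_1(x)u'_2(x)}{\varPhi^2[u_1(x)]^2+[u'_1(x)]^2},\qquad Y(x,\varPhi)=\frac{\varPhi}{\varPhi^2[u_1(x)]^2+[u'_1(x)]^2}, \] is a local diffeomorphism from the Riemannian manifold $\mathbb{M}_h=(\mathcal{H}_0,g_h)$ to the Poincaré upper half plane $\mathbb{H}=(\mathcal{H},g_{\mathbb{H}})$, i.e. a local diffeomorphism $\mathcal{H}_0\to\mathcal{H}$ under which $g_{\mathbb{H}}$ pulls back to $g_h$.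
   Context: $\mathcal{H}=\{(X,Y)\in\mathbb{R}^2\mid Y>0\}$ with metric $g_{\mathbb{H}}=(dX^2+dY^2)/Y^2$ is the Poincaré upper half plane $\mathbb{H}$. $\mathcal{H}_0=\{(x,\varPhi)\in\mathbb{R}^2\mid\varPhi>0,\ \varPhi^2\neq h(x)\}$ with metric $g_h=\left[(h(x)-\varPhi^2)^2dx^2+d\varPhi^2\right]/\varPhi^2$ is $\mathbb{M}_h$. *)

From Stdlib Require Import Reals.
From Coquelicot Require Import Coquelicot.
Open Scope R_scope.

Definition partial1 (f : R * R -> R) (p : R * R) : R :=
  Derive (fun t => f (t, snd p)) (fst p).
Definition partial2 (f : R * R -> R) (p : R * R) : R :=
  Derive (fun t => f (fst p, t)) (snd p).

Definition C1_fun_on (D : R * R -> Prop) (f : R * R -> R) : Prop :=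
  forall p, D p ->
    ex_derive (fun t => f (t, snd p)) (fst p) /\
    ex_derive (fun t => f (fst p, t)) (snd p) /\
    continuous (partial1 f) p /\ continuous (partial2 f) p.

Definition C1_on (D : R * R -> Prop) (F : R * R -> R * R) : Prop :=
  C1_fun_on D (fun p => fst (F p)) /\ C1_fun_on D (fun p => snd (F p)).

Definition local_diffeo (D E : R * R -> Prop) (F : R * R -> R * R) : Prop :=
  (forall p, D p -> E (F p)) /\
  C1_on D F /\
  forall p, D p ->
    exists (U V : R * R -> Prop) (G : R * R -> R * R),
      open U /\ open V /\ U p /\
      (forall q, U q -> D q) /\ (forall v, V v -> E v) /\
      (forall q, U q -> V (F q)) /\ (forall v, V v -> U (G v)) /\
      (forall q, U q -> G (F q) = q) /\ (forall v, V v -> F (G v) = v) /\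
      C1_on V G.

Definition dmap (F : R * R -> R * R) (p v : R * R) : R * R :=
  (partial1 (fun q => fst (F q)) p * fst v + partial2 (fun q => fst (F q)) p * snd v,
   partial1 (fun q => snd (F q)) p * fst v + partial2 (fun q => snd (F q)) p * snd v).

(** A Riemannian metric on (an open subset of) R^2, given pointwise as a
    bilinear form on tangent vectors. *)
Definition metric2 := R * R -> R * R -> R * R -> R.

Definition pullback_eq (D : R * R -> Prop) (F : R * R -> R * R)
    (g2 g1 : metric2) : Prop :=
  forall p, D p -> forall v w : R * R, g2 (F p) (dmap F p v) (dmap F p w) = g1 p v w.

Definition H_set (P : R * R) : Prop := snd P > 0.
Definition g_H : metric2 :=
  fun P v w => (fst v * fst w + snd v * snd w) / (snd P) ^ 2.

(** The manifold M_h = (H_0, g_h). Coordinates p = (x, Phi). *)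
Definition H0_set (h : R -> R) (p : R * R) : Prop :=
  snd p > 0 /\ (snd p) ^ 2 <> h (fst p).
Definition g_h (h : R -> R) : metric2 :=
  fun p v w =>
    ((h (fst p) - (snd p) ^ 2) ^ 2 * (fst v * fst w) + snd v * snd w) / (snd p) ^ 2.

(** The map (x, Phi) |-> (X, Y) of the statement; [s] is the sign (+1 or -1). *)
Definition XY_map (u1 du1 u2 du2 : R -> R) (W X0 s : R) (p : R * R) : R * R :=
  let x := fst p in let Phi := snd p in
  let den := Phi ^ 2 * (u1 x) ^ 2 + (du1 x) ^ 2 in
  (X0 + s * / W * ((Phi ^ 2 * u1 x * u2 x + du1 x * du2 x) / den),
   Phi / den).

(* Writing a = s W (X - X0) and b = W Y, the map (x, Phi) |-> (X, Y) is a Moebius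
   transformation in Phi: a + i b = (Phi u2 - i u2') / (Phi u1 - i u1').  Computing its
   partial derivatives, the Gram matrix of the columns divided by Y^2 is
   diag((h - Phi^2)^2, 1) / Phi^2, which is g_h.  To invert, one solves for Phi: the
   solution is real iff a single scalar equation R(x, X, Y) = 0 holds, and on the image
   dR/dx = (h - Phi^2) W^2 / (Phi^2 u1^2 + u1'^2), nonzero on H_0.  The implicit function
   theorem in the one variable x, with parameters (X, Y), gives a continuous root x(X, Y),
   which is C^1 by implicit differentiation; Phi is then an explicit function of
   (x, X, Y). *)

From Stdlib Require Import Reals Lra Classical IndefiniteDescription.
From Coquelicot Require Import Coquelicot.
Open Scope R_scope.

Lemma ball_R (x y e : R) : ball x e y <-> Rabs (y - x) < e.
Proof. reflexivity. Qed.

Lemma ball_R2 (p q : R * R) e :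
  ball p e q <-> Rabs (fst q - fst p) < e /\ Rabs (snd q - snd p) < e.
Proof. destruct p, q. reflexivity. Qed.

Lemma open_ball_R2 (c : R * R) (r : R) : open (ball c r).
Proof.
destruct c as [c1 c2]. intros [v1 v2] Hv.
destruct (proj1 (ball_R2 (c1, c2) (v1, v2) r) Hv) as [H1 H2]. simpl in H1, H2.
assert (Hm : 0 < Rmin (r - Rabs (v1 - c1)) (r - Rabs (v2 - c2))) by (apply Rmin_glb_lt; lra).
exists (mkposreal _ Hm). intros [w1 w2] Hw.
destruct (proj1 (ball_R2 (v1, v2) (w1, w2) _) Hw) as [Hw1 Hw2]. simpl in Hw1, Hw2.
apply ball_R2. simpl.
pose proof (Rmin_l (r - Rabs (v1 - c1)) (r - Rabs (v2 - c2))).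
pose proof (Rmin_r (r - Rabs (v1 - c1)) (r - Rabs (v2 - c2))).
pose proof (Rabs_triang (w1 - v1) (v1 - c1)).
pose proof (Rabs_triang (w2 - v2) (v2 - c2)).
replace (w1 - c1) with ((w1 - v1) + (v1 - c1)) by ring.
replace (w2 - c2) with ((w2 - v2) + (v2 - c2)) by ring.
split; lra.
Qed.

Lemma continuous_eps (g : R -> R) t0 : continuous g t0 ->
  forall eps, 0 < eps -> exists d, 0 < d /\
    forall t, Rabs (t - t0) < d -> Rabs (g t - g t0) < eps.
Proof.
intros Hg eps Heps.
destruct (Hg _ (locally_ball (g t0) (mkposreal eps Heps))) as [d Hd].
exists d. split; [apply cond_pos | intros t Ht; exact (Hd t Ht)].
Qed.

Lemma is_lim_0_eps (A : R -> R) (L : R) : is_lim A 0 L <->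
  forall eps, 0 < eps -> exists a, 0 < a /\
    forall k, k <> 0 -> Rabs k < a -> Rabs (A k - L) < eps.
Proof.
rewrite is_lim_Reals. split.
- intros H eps Heps. destruct (H eps Heps) as [a [Ha Hb]]. exists a; split; auto.
  intros k Hk1 Hk2. apply Hb. split; auto. simpl; unfold R_dist; rewrite Rminus_0_r; auto.
- intros H eps Heps. destruct (H eps Heps) as [a [Ha Hb]]. exists a; split; auto.
  intros k [Hk1 Hk2]. simpl in *. unfold R_dist in *. rewrite Rminus_0_r in Hk2. auto.
Qed.

Lemma is_derive_difference_quotient (g : R -> R) (t0 l : R) :
  is_derive g t0 l <-> is_lim (fun k => (g (t0 + k) - g t0) / k) 0 l.
Proof.
rewrite is_lim_0_eps. split.
- intros H%is_derive_Reals eps Heps. destruct (H eps Heps) as [a Ha].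
  exists a. split; [apply cond_pos|]. intros k Hk1 Hk2. apply Ha; auto.
- intros H. apply is_derive_Reals. intros eps Heps. destruct (H eps Heps) as [a [Ha Hb]].
  exists (mkposreal a Ha). intros k Hk1 Hk2. apply Hb; auto.
Qed.

Lemma mean_value (f df : R -> R) a b :
  (forall x, Rabs (x - a) <= Rabs (b - a) -> is_derive f x (df x)) ->
  exists c, Rabs (c - a) <= Rabs (b - a) /\ f b - f a = df c * (b - a).
Proof.
intros H.
assert (Hin : forall x, Rmin a b <= x <= Rmax a b -> Rabs (x - a) <= Rabs (b - a)).
{ intros x Hx. destruct (Rle_dec a b).
  - rewrite Rmin_left, Rmax_right in Hx by lra. rewrite !Rabs_right; lra.
  - rewrite Rmin_right, Rmax_left in Hx by lra. rewrite !Rabs_left1; lra. }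
destruct (MVT_gen f a b df) as [c [Hc E]].
- intros x Hx. apply H, Hin. lra.
- intros x Hx. apply derivable_continuous_pt. exists (df x). apply is_derive_Reals, H, Hin, Hx.
- exists c. split; [apply Hin, Hc | exact E].
Qed.

Section ContinuityRules.
Context {T : UniformSpace}.

Lemma continuous_Rplus_comp (f g : T -> R) p :
  continuous f p -> continuous g p -> continuous (fun q => f q + g q) p.
Proof. apply (continuous_plus f g). Qed.
Lemma continuous_Rmult_comp (f g : T -> R) p :
  continuous f p -> continuous g p -> continuous (fun q => f q * g q) p.
Proof. apply (continuous_mult f g). Qed.
Lemma continuous_Ropp_comp (f : T -> R) p : continuous f p -> continuous (fun q => - f q) p.
Proof. apply (continuous_opp f). Qed.
Lemma continuous_Rminus_comp (f g : T -> R) p :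
  continuous f p -> continuous g p -> continuous (fun q => f q - g q) p.
Proof. intros; apply continuous_Rplus_comp; [|apply continuous_Ropp_comp]; auto. Qed.
Lemma continuous_Rinv_comp' (f : T -> R) p :
  continuous f p -> f p <> 0 -> continuous (fun q => / f q) p.
Proof. intros; apply (continuous_comp f Rinv); auto. apply continuous_Rinv; auto. Qed.
Lemma continuous_Rdiv_comp (f g : T -> R) p :
  continuous f p -> continuous g p -> g p <> 0 -> continuous (fun q => f q / g q) p.
Proof. intros; apply continuous_Rmult_comp; [|apply continuous_Rinv_comp']; auto. Qed.
Lemma continuous_pow_comp (f : T -> R) n p :
  continuous f p -> continuous (fun q => f q ^ n) p.
Proof.
intros H; induction n; simpl; [apply continuous_const | apply continuous_Rmult_comp; auto].
Qed.

End ContinuityRules.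

Lemma continuous_fst_at {U V : UniformSpace} (p : U * V) : continuous (fun q => fst q) p.
Proof. destruct p; apply continuous_fst. Qed.
Lemma continuous_snd_at {U V : UniformSpace} (p : U * V) : continuous (fun q => snd q) p.
Proof. destruct p; apply continuous_snd. Qed.
Lemma continuous_pair {U V W : UniformSpace} (f : U -> V) (g : U -> W) p :
  continuous f p -> continuous g p -> continuous (fun q => (f q, g q)) p.
Proof.
intros Hf Hg. apply (continuous_comp_2 f g pair); auto.
apply continuous_ext with (fun z => z); [intros [a b]; reflexivity | apply continuous_id].
Qed.
Lemma continuous_fst_comp {U V W : UniformSpace} (f : W -> U * V) p :
  continuous f p -> continuous (fun q => fst (f q)) p.
Proof. intros; apply (continuous_comp f fst); auto; apply continuous_fst_at. Qed.
Lemma continuous_snd_comp {U V W : UniformSpace} (f : W -> U * V) p :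
  continuous f p -> continuous (fun q => snd (f q)) p.
Proof. intros; apply (continuous_comp f snd); auto; apply continuous_snd_at. Qed.

(* Leaves continuity goals for opaque functions and nonvanishing goals for denominators. *)
Ltac decompose_continuous :=
  match goal with
  | |- continuous (fun q => ?c) _ => apply continuous_const
  | |- continuous (fun q => @?a q + @?b q) _ => apply (continuous_Rplus_comp a b); decompose_continuous
  | |- continuous (fun q => @?a q - @?b q) _ => apply (continuous_Rminus_comp a b); decompose_continuous
  | |- continuous (fun q => @?a q * @?b q) _ => apply (continuous_Rmult_comp a b); decompose_continuous
  | |- continuous (fun q => @?a q / @?b q) _ =>
      apply (continuous_Rdiv_comp a b); [decompose_continuous | decompose_continuous |]
  | |- continuous (fun q => - @?a q) _ => apply (continuous_Ropp_comp a); decompose_continuous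
  | |- continuous (fun q => / @?a q) _ => apply (continuous_Rinv_comp' a); [decompose_continuous |]
  | |- continuous (fun q => @?a q ^ ?n) _ => apply (continuous_pow_comp a n); decompose_continuous
  | |- continuous (fun q => fst q) _ => apply continuous_fst_at
  | |- continuous (fun q => snd q) _ => apply continuous_snd_at
  | |- continuous (fun q => fst (@?a q)) _ => apply (continuous_fst_comp a); decompose_continuous
  | |- continuous (fun q => snd (@?a q)) _ => apply (continuous_snd_comp a); decompose_continuous
  | |- continuous (fun q => ?u (@?a q)) _ => apply (continuous_comp a u); [decompose_continuous |]
  | |- _ => idtac
  end.


Section CurveDerivative.
Variables (phi phix phit : R -> R -> R) (g : R -> R) (t0 rho : R).
Hypothesis rho_pos : 0 < rho.
Hypothesis phi_dx : forall x t, Rabs (t - t0) < rho -> is_derive (fun y => phi y t) x (phix x t).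
Hypothesis phi_dt : forall x t, Rabs (t - t0) < rho -> is_derive (phi x) t (phit x t).
Hypothesis phix_cont : continuity_2d_pt phix (g t0) t0.
Hypothesis phit_cont : continuity_2d_pt phit (g t0) t0.
Hypothesis g_cont : continuous g t0.

Lemma mean_value_increment_split : exists A B : R -> R,
  is_lim A 0 (phix (g t0) t0) /\ is_lim B 0 (phit (g t0) t0) /\
  forall k, Rabs k < rho ->
    phi (g (t0 + k)) (t0 + k) - phi (g t0) t0 = A k * (g (t0 + k) - g t0) + B k * k.
Proof.
assert (Hx : forall k, exists c, Rabs k < rho ->
  Rabs (c - g t0) <= Rabs (g (t0 + k) - g t0) /\
  phi (g (t0 + k)) (t0 + k) - phi (g t0) (t0 + k) = phix c (t0 + k) * (g (t0 + k) - g t0)).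
{ intros k. destruct (Rlt_dec (Rabs k) rho) as [Hk|Hk]; [|exists 0; tauto].
  destruct (mean_value (fun y => phi y (t0 + k)) (fun y => phix y (t0 + k)) (g t0) (g (t0 + k)))
    as [c Hc]; [|exists c; auto].
  intros y _. apply phi_dx. replace (t0 + k - t0) with k by ring. exact Hk. }
assert (Ht : forall k, exists c, Rabs k < rho ->
  Rabs (c - t0) <= Rabs k /\ phi (g t0) (t0 + k) - phi (g t0) t0 = phit (g t0) c * k).
{ intros k. destruct (Rlt_dec (Rabs k) rho) as [Hk|Hk]; [|exists 0; tauto].
  replace (Rabs k) with (Rabs (t0 + k - t0)) by (f_equal; ring).
  destruct (mean_value (phi (g t0)) (phit (g t0)) t0 (t0 + k)) as [c [Hc E]].
  - intros y Hy. apply phi_dt. replace (t0 + k - t0) with k in Hy by ring. lra.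
  - exists c. intros _. split; [exact Hc|]. rewrite E. f_equal. ring. }
destruct (functional_choice _ Hx) as [cx Hcx].
destruct (functional_choice _ Ht) as [ct Hct].
exists (fun k => phix (cx k) (t0 + k)), (fun k => phit (g t0) (ct k)).
split; [|split].
- apply is_lim_0_eps. intros eps Heps.
  destruct (phix_cont (mkposreal eps Heps)) as [d1 H1].
  destruct (continuous_eps g t0 g_cont d1 (cond_pos d1)) as [d2 [Hd2 H2]].
  exists (Rmin rho (Rmin d1 d2)).
  split; [repeat apply Rmin_glb_lt; auto; apply cond_pos|].
  intros k _ Hk. apply Rmin_Rgt in Hk. destruct Hk as [Hk1 Hk]. apply Rmin_Rgt in Hk.
  destruct Hk as [Hk2 Hk3]. destruct (Hcx k Hk1) as [Hc _].
  apply H1.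
  + eapply Rle_lt_trans; [exact Hc|]. apply H2. replace (t0 + k - t0) with k by ring; auto.
  + replace (t0 + k - t0) with k by ring; auto.
- apply is_lim_0_eps. intros eps Heps.
  destruct (phit_cont (mkposreal eps Heps)) as [d1 H1].
  exists (Rmin rho d1). split; [apply Rmin_glb_lt; auto; apply cond_pos|].
  intros k _ Hk. apply Rmin_Rgt in Hk. destruct Hk as [Hk1 Hk2].
  destruct (Hct k Hk1) as [Hc _].
  apply H1; [rewrite Rminus_diag, Rabs_R0; apply cond_pos | lra].
- intros k Hk. destruct (Hcx k Hk) as [_ E1]. destruct (Hct k Hk) as [_ E2].
  rewrite <- E1, <- E2. ring.
Qed.

Lemma is_derive_implicit_curve :
  (forall k, Rabs k < rho -> phi (g (t0 + k)) (t0 + k) = 0) ->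
  phix (g t0) t0 <> 0 ->
  is_derive g t0 (- (phit (g t0) t0 / phix (g t0) t0)).
Proof.
intros Hroot Hnz.
destruct mean_value_increment_split as [A [B [HA [HB HE]]]].
apply is_derive_difference_quotient.
assert (HL : is_lim (fun k => - (B k / A k)) 0 (- (phit (g t0) t0 / phix (g t0) t0))).
{ apply (is_lim_opp (fun k => B k / A k) 0 (phit (g t0) t0 / phix (g t0) t0)).
  apply (is_lim_div B A 0 (phit (g t0) t0) (phix (g t0) t0)); auto.
  - intros E; injection E; auto.
  - exact I. }
eapply is_lim_ext_loc; [|exact HL].
destruct (proj1 (is_lim_0_eps A _) HA (Rabs (phix (g t0) t0)) (Rabs_pos_lt _ Hnz))
  as [a [Ha HAa]].
exists (mkposreal (Rmin a rho) (Rmin_glb_lt _ _ _ Ha rho_pos)). intros k Hk Hk0.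
assert (Hk' : Rabs k < Rmin a rho) by (rewrite <- (Rminus_0_r k); exact Hk).
apply Rmin_Rgt in Hk'. destruct Hk' as [Hka Hkr].
assert (HAk : A k <> 0).
{ intros E. specialize (HAa k Hk0 Hka). rewrite E, Rminus_0_l, Rabs_Ropp in HAa. lra. }
assert (H0 : phi (g t0) t0 = 0).
{ rewrite <- (Rplus_0_r t0). apply Hroot. rewrite Rabs_R0. exact rho_pos. }
specialize (HE k Hkr). rewrite Hroot, H0 in HE by auto.
field_simplify_eq; [|split; auto]. lra.
Qed.

Lemma is_derive_along_curve g' :
  is_derive g t0 g' ->
  is_derive (fun t => phi (g t) t) t0 (phix (g t0) t0 * g' + phit (g t0) t0).
Proof.
intros Hg%is_derive_difference_quotient.
destruct mean_value_increment_split as [A [B [HA [HB HE]]]].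
apply is_derive_difference_quotient.
assert (HL : is_lim (fun k => A k * ((g (t0 + k) - g t0) / k) + B k) 0
                    (phix (g t0) t0 * g' + phit (g t0) t0)).
{ eapply is_lim_plus.
  - apply (is_lim_mult A _ 0 (phix (g t0) t0) g'); auto. exact I.
  - exact HB.
  - reflexivity. }
eapply is_lim_ext_loc; [|exact HL].
exists (mkposreal rho rho_pos). intros k Hk Hk0.
assert (Hk' : Rabs k < rho) by (rewrite <- (Rminus_0_r k); exact Hk).
rewrite HE by exact Hk'. field. exact Hk0.
Qed.

End CurveDerivative.

Definition jointly_continuous (f : R -> R * R -> R) (x : R) (v : R * R) : Prop :=
  continuous (fun q : R * (R * R) => f (fst q) (snd q)) (x, v).

Lemma jointly_continuous_pos f x v : jointly_continuous f x v -> 0 < f x v ->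
  exists d, 0 < d /\ forall x' v', Rabs (x' - x) < d -> ball v d v' -> 0 < f x' v'.
Proof.
intros Hf Hpos. destruct (Hf _ (locally_ball (f x v) (mkposreal _ Hpos))) as [d Hd].
exists d. split; [apply cond_pos|]. intros x' v' Hx Hv.
assert (H : Rabs (f x' v' - f x v) < f x v) by exact (Hd (x', v') (conj Hx Hv)).
apply Rabs_def2 in H. lra.
Qed.

Lemma continuous_comp_jointly (f : R -> R * R -> R) (g : R * R -> R) v :
  continuous g v -> jointly_continuous f (g v) v -> continuous (fun w => f (g w) w) v.
Proof.
intros Hg Hf.
apply (continuous_comp (fun w => (g w, w)) (fun q : R * (R * R) => f (fst q) (snd q))); [|exact Hf].
apply continuous_pair; [exact Hg | apply continuous_id].
Qed.

Lemma jointly_continuous_scal (c : R) (f : R -> R * R -> R) x v :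
  jointly_continuous f x v -> jointly_continuous (fun y w => c * f y w) x v.
Proof. intros Hf. apply continuous_Rmult_comp; [apply continuous_const | exact Hf]. Qed.

Lemma continuous_slice1 (g : R * R -> R) X Y :
  continuous g (X, Y) -> continuous (fun t => g (t, Y)) X.
Proof.
intros Hg. apply (continuous_comp (fun t => (t, Y)) g); [|exact Hg].
apply continuous_pair; [apply continuous_id | apply continuous_const].
Qed.
Lemma continuous_slice2 (g : R * R -> R) X Y :
  continuous g (X, Y) -> continuous (fun t => g (X, t)) Y.
Proof.
intros Hg. apply (continuous_comp (fun t => (X, t)) g); [|exact Hg].
apply continuous_pair; [apply continuous_const | apply continuous_id].
Qed.

Lemma jointly_continuous_slice1 (f : R -> R * R -> R) x X Y :
  jointly_continuous f x (X, Y) -> continuity_2d_pt (fun y t => f y (t, Y)) x X.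
Proof.
intros Hf. apply continuity_2d_pt_filterlim.
apply (continuous_comp (fun z : R * R => (fst z, (snd z, Y))) (fun q : R * (R * R) => f (fst q) (snd q)));
  [|exact Hf].
apply continuous_pair; [apply continuous_fst_at|].
apply continuous_pair; [apply continuous_snd_at | apply continuous_const].
Qed.
Lemma jointly_continuous_slice2 (f : R -> R * R -> R) x X Y :
  jointly_continuous f x (X, Y) -> continuity_2d_pt (fun y t => f y (X, t)) x Y.
Proof.
intros Hf. apply continuity_2d_pt_filterlim.
apply (continuous_comp (fun z : R * R => (fst z, (X, snd z))) (fun q : R * (R * R) => f (fst q) (snd q)));
  [|exact Hf].
apply continuous_pair; [apply continuous_fst_at|].
apply continuous_pair; [apply continuous_const | apply continuous_snd_at].
Qed.

Section ParametricRoot.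
Variables f fx : R -> R * R -> R.
Hypothesis f_dx : forall x v, is_derive (fun y => f y v) x (fx x v).
Hypothesis f_cont : forall x v, jointly_continuous f x v.
Hypothesis fx_cont : forall x v, jointly_continuous fx x v.

Lemma root_increasing v c d x x' :
  (forall y, Rabs (y - c) < d -> fx y v > 0) ->
  Rabs (x - c) < d -> Rabs (x' - c) < d -> x < x' -> f x v < f x' v.
Proof.
intros Hpos Hx Hx' Hlt. apply Rabs_def2 in Hx, Hx'.
apply (incr_function (fun y => f y v) (c - d) (c + d) (fun y => fx y v));
  simpl; try lra.
- intros y _ _. apply f_dx.
- intros y H1 H2. apply Hpos, Rabs_def1; lra.
Qed.

Lemma root_unique v c d x x' :
  (forall y, Rabs (y - c) < d -> fx y v > 0) ->
  Rabs (x - c) < d -> Rabs (x' - c) < d -> f x v = 0 -> f x' v = 0 -> x = x'.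
Proof.
intros Hpos Hx Hx' E E'.
destruct (Rtotal_order x x') as [Hlt|[Heq|Hgt]]; auto.
- pose proof (root_increasing v c d x x' Hpos Hx Hx' Hlt). lra.
- pose proof (root_increasing v c d x' x Hpos Hx' Hx Hgt). lra.
Qed.

Lemma root_exists x1 v1 d0 :
  f x1 v1 = 0 -> fx x1 v1 > 0 -> 0 < d0 ->
  exists d r, 0 < d <= d0 /\ 0 < r /\
    (forall x v, Rabs (x - x1) < d -> ball v1 r v -> fx x v > 0) /\
    (forall v, ball v1 r v -> exists x, Rabs (x - x1) < d /\ f x v = 0).
Proof.
intros E0 Hp Hd0.
destruct (jointly_continuous_pos fx x1 v1 (fx_cont x1 v1) Hp) as [d1 [Hd1 Hpos]].
set (d := Rmin d0 d1).
assert (Hd : 0 < d) by (apply Rmin_glb_lt; lra).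
assert (Hdd1 : d <= d1) by apply Rmin_r.
assert (Hpos1 : forall y, Rabs (y - x1) < d -> fx y v1 > 0).
{ intros y Hy. apply Hpos; [lra | exact (ball_center v1 (mkposreal d1 Hd1))]. }
assert (Hx1 : Rabs (x1 - x1) < d) by (rewrite Rminus_diag, Rabs_R0; exact Hd).
assert (Hhalf : forall e, Rabs e = d / 2 -> Rabs (x1 + e - x1) < d).
{ intros e He. replace (x1 + e - x1) with e by ring. lra. }
assert (Hright : 0 < f (x1 + d / 2) v1).
{ rewrite <- E0. apply (root_increasing v1 x1 d); auto; [|lra].
  apply Hhalf, Rabs_right. lra. }
assert (Hleft : 0 < - f (x1 + - (d / 2)) v1).
{ apply Ropp_0_gt_lt_contravar. rewrite <- E0. apply (root_increasing v1 x1 d); auto; [|lra].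
  apply Hhalf. rewrite Rabs_Ropp. apply Rabs_right. lra. }
destruct (jointly_continuous_pos f _ v1 (f_cont _ v1) Hright) as [d2 [Hd2 Hr2]].
destruct (jointly_continuous_pos (fun x v => - f x v) _ v1
  (continuous_Ropp_comp _ _ (f_cont _ v1)) Hleft) as [d3 [Hd3 Hr3]].
set (r := Rmin d1 (Rmin d2 d3)).
assert (Hr : 0 < r) by (repeat apply Rmin_glb_lt; auto).
assert (Hin : forall e v, r <= e -> ball v1 r v -> ball v1 e v) by exact (fun e v H => ball_le v1 r e H v).
exists d, r. split; [split; [exact Hd | apply Rmin_l]|]. split; [exact Hr|]. split.
- intros x v Hx Hv. apply Hpos; [lra | apply Hin; [apply Rmin_l | exact Hv]].
- intros v Hv.
  assert (Hr2' : r <= d2) by (eapply Rle_trans; [apply Rmin_r | apply Rmin_l]).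
  assert (Hr3' : r <= d3) by (eapply Rle_trans; [apply Rmin_r | apply Rmin_r]).
  assert (Pr : 0 < f (x1 + d / 2) v).
  { apply Hr2; [rewrite Rminus_diag, Rabs_R0; exact Hd2 | apply Hin; auto]. }
  assert (Pl : 0 < - f (x1 + - (d / 2)) v).
  { apply (Hr3 _ v); [rewrite Rminus_diag, Rabs_R0; exact Hd3 | apply Hin; auto]. }
  destruct (IVT_gen (fun y => f y v) (x1 + - (d / 2)) (x1 + d / 2) 0) as [x [Hx Ex]].
  + intros y. apply derivable_continuous_pt. exists (fx y v). apply is_derive_Reals, f_dx.
  + rewrite Rmin_left, Rmax_right by lra. lra.
  + exists x. split; [|exact Ex]. rewrite Rmin_left, Rmax_right in Hx by lra.
    apply Rabs_def1; lra.
Qed.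

Lemma implicit_function x1 v1 d0 :
  f x1 v1 = 0 -> fx x1 v1 > 0 -> 0 < d0 ->
  exists d r (g : R * R -> R), 0 < d <= d0 /\ 0 < r /\
    forall v, ball v1 r v ->
      Rabs (g v - x1) < d /\ f (g v) v = 0 /\ fx (g v) v > 0 /\
      (forall x, Rabs (x - x1) < d -> f x v = 0 -> x = g v) /\ continuous g v.
Proof.
intros E0 Hp Hd0.
destruct (root_exists x1 v1 d0 E0 Hp Hd0) as [d [r [Hd [Hr [Hpos Hex]]]]].
assert (Hg : forall v, exists x, ball v1 r v -> Rabs (x - x1) < d /\ f x v = 0).
{ intros v. destruct (classic (ball v1 r v)) as [Hv|Hv]; [|exists x1; tauto].
  destruct (Hex v Hv) as [x Hx]. exists x. auto. }
destruct (functional_choice _ Hg) as [g Hgv].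
assert (Huniq : forall v, ball v1 r v -> forall x, Rabs (x - x1) < d -> f x v = 0 -> x = g v).
{ intros v Hv x Hx Ex. destruct (Hgv v Hv) as [Hgx Eg].
  apply (root_unique v x1 d); auto. }
exists d, r, g. split; [exact Hd|]. split; [exact Hr|].
intros v Hv. destruct (Hgv v Hv) as [Hgx Eg].
split; [exact Hgx|]. split; [exact Eg|]. split; [apply Hpos; auto|]. split; [apply Huniq; auto|].
intros P [eps HP].
assert (Hm : 0 < Rmin eps (d - Rabs (g v - x1))) by (apply Rmin_glb_lt; [apply cond_pos | lra]).
destruct (root_exists (g v) v _ Eg (Hpos _ _ Hgx Hv) Hm) as [d' [r' [[Hd' Hd'm] [Hr' [_ Hex']]]]].
assert (Hnear : locally v (fun w => ball v r' w /\ ball v1 r w)).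
{ apply filter_and; [exact (locally_ball v (mkposreal r' Hr')) | exact (open_ball_R2 v1 r v Hv)]. }
refine (filter_imp _ _ _ Hnear). intros w [Hw Hw1].
destruct (Hex' w Hw) as [x [Hx Ex]].
pose proof (Rmin_l eps (d - Rabs (g v - x1))). pose proof (Rmin_r eps (d - Rabs (g v - x1))).
assert (Hxx1 : Rabs (x - x1) < d).
{ pose proof (Rabs_triang (x - g v) (g v - x1)).
  replace (x - x1) with ((x - g v) + (g v - x1)) by ring. lra. }
apply HP, ball_R. rewrite <- (Huniq w Hw1 x Hxx1 Ex). lra.
Qed.

End ParametricRoot.

Lemma open_R2_slices (D : R * R -> Prop) X Y : open D -> D (X, Y) ->
  exists rho, 0 < rho /\ forall k, Rabs k < rho -> D (X + k, Y) /\ D (X, Y + k).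
Proof.
intros HD Hv. destruct (HD _ Hv) as [e He]. exists e. split; [apply cond_pos|].
intros k Hk. split; apply He, ball_R2; simpl; split;
  rewrite ?Rminus_diag, ?Rabs_R0; try apply cond_pos;
  [replace (X + k - X) with k by ring | replace (Y + k - Y) with k by ring]; exact Hk.
Qed.

Section SmoothDependence.
Variables (D : R * R -> Prop) (f fx fX fY : R -> R * R -> R) (g : R * R -> R).
Hypothesis D_open : open D.
Hypothesis f_dx : forall x v, D v -> is_derive (fun y => f y v) x (fx x v).
Hypothesis f_dX : forall x v, D v -> is_derive (fun t => f x (t, snd v)) (fst v) (fX x v).
Hypothesis f_dY : forall x v, D v -> is_derive (fun t => f x (fst v, t)) (snd v) (fY x v).
Hypothesis fx_cont : forall x v, D v -> jointly_continuous fx x v.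
Hypothesis fX_cont : forall x v, D v -> jointly_continuous fX x v.
Hypothesis fY_cont : forall x v, D v -> jointly_continuous fY x v.
Hypothesis g_cont : forall v, D v -> continuous g v.

Lemma is_derive_comp_slice1 X Y l : D (X, Y) ->
  is_derive (fun t => g (t, Y)) X l ->
  is_derive (fun t => f (g (t, Y)) (t, Y)) X (fx (g (X, Y)) (X, Y) * l + fX (g (X, Y)) (X, Y)).
Proof.
intros Hv Hl. destruct (open_R2_slices D X Y D_open Hv) as [rho [Hrho HD]].
apply (is_derive_along_curve (fun y t => f y (t, Y)) (fun y t => fx y (t, Y))
  (fun y t => fX y (t, Y)) (fun t => g (t, Y)) X rho); auto.
- intros x t Ht. apply f_dx. replace t with (X + (t - X)) by ring. apply HD; auto.
- intros x t Ht. apply (f_dX x (t, Y)). replace t with (X + (t - X)) by ring. apply HD; auto.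
- apply jointly_continuous_slice1, fx_cont, Hv.
- apply jointly_continuous_slice1, fX_cont, Hv.
- apply continuous_slice1, g_cont, Hv.
Qed.

Lemma is_derive_comp_slice2 X Y l : D (X, Y) ->
  is_derive (fun t => g (X, t)) Y l ->
  is_derive (fun t => f (g (X, t)) (X, t)) Y (fx (g (X, Y)) (X, Y) * l + fY (g (X, Y)) (X, Y)).
Proof.
intros Hv Hl. destruct (open_R2_slices D X Y D_open Hv) as [rho [Hrho HD]].
apply (is_derive_along_curve (fun y t => f y (X, t)) (fun y t => fx y (X, t))
  (fun y t => fY y (X, t)) (fun t => g (X, t)) Y rho); auto.
- intros x t Ht. apply f_dx. replace t with (Y + (t - Y)) by ring. apply HD; auto.
- intros x t Ht. apply (f_dY x (X, t)). replace t with (Y + (t - Y)) by ring. apply HD; auto.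
- apply jointly_continuous_slice2, fx_cont, Hv.
- apply jointly_continuous_slice2, fY_cont, Hv.
- apply continuous_slice2, g_cont, Hv.
Qed.

Section Implicit.
Hypothesis g_root : forall v, D v -> f (g v) v = 0.
Hypothesis fx_neq0 : forall v, D v -> fx (g v) v <> 0.

Lemma is_derive_implicit_slice1 X Y : D (X, Y) ->
  is_derive (fun t => g (t, Y)) X (- (fX (g (X, Y)) (X, Y) / fx (g (X, Y)) (X, Y))).
Proof.
intros Hv. destruct (open_R2_slices D X Y D_open Hv) as [rho [Hrho HD]].
apply (is_derive_implicit_curve (fun y t => f y (t, Y)) (fun y t => fx y (t, Y))
  (fun y t => fX y (t, Y)) (fun t => g (t, Y)) X rho); auto.
- intros x t Ht. apply f_dx. replace t with (X + (t - X)) by ring. apply HD; auto.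
- intros x t Ht. apply (f_dX x (t, Y)). replace t with (X + (t - X)) by ring. apply HD; auto.
- apply jointly_continuous_slice1, fx_cont, Hv.
- apply jointly_continuous_slice1, fX_cont, Hv.
- apply continuous_slice1, g_cont, Hv.
- intros k Hk. apply g_root, HD, Hk.
Qed.

Lemma is_derive_implicit_slice2 X Y : D (X, Y) ->
  is_derive (fun t => g (X, t)) Y (- (fY (g (X, Y)) (X, Y) / fx (g (X, Y)) (X, Y))).
Proof.
intros Hv. destruct (open_R2_slices D X Y D_open Hv) as [rho [Hrho HD]].
apply (is_derive_implicit_curve (fun y t => f y (X, t)) (fun y t => fx y (X, t))
  (fun y t => fY y (X, t)) (fun t => g (X, t)) Y rho); auto.
- intros x t Ht. apply f_dx. replace t with (Y + (t - Y)) by ring. apply HD; auto.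
- intros x t Ht. apply (f_dY x (X, t)). replace t with (Y + (t - Y)) by ring. apply HD; auto.
- apply jointly_continuous_slice2, fx_cont, Hv.
- apply jointly_continuous_slice2, fY_cont, Hv.
- apply continuous_slice2, g_cont, Hv.
- intros k Hk. apply g_root, HD, Hk.
Qed.

Lemma C1_implicit : C1_fun_on D g.
Proof.
intros [X Y] Hv. split; [|split; [|split]].
- eexists. apply is_derive_implicit_slice1, Hv.
- eexists. apply is_derive_implicit_slice2, Hv.
- apply (continuous_ext_loc _ (fun w => - (fX (g w) w / fx (g w) w))).
  + apply (filter_imp D); [|exact (D_open _ Hv)]. intros [X' Y'] Hw.
    symmetry. apply is_derive_unique, is_derive_implicit_slice1, Hw.
  + apply continuous_Ropp_comp, continuous_Rdiv_comp; auto;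
      apply continuous_comp_jointly; auto.
- apply (continuous_ext_loc _ (fun w => - (fY (g w) w / fx (g w) w))).
  + apply (filter_imp D); [|exact (D_open _ Hv)]. intros [X' Y'] Hw.
    symmetry. apply is_derive_unique, is_derive_implicit_slice2, Hw.
  + apply continuous_Ropp_comp, continuous_Rdiv_comp; auto;
      apply continuous_comp_jointly; auto.
Qed.

End Implicit.

Lemma C1_comp_jointly : C1_fun_on D g -> C1_fun_on D (fun v => f (g v) v).
Proof.
intros Hg [X Y] Hv. destruct (Hg _ Hv) as [[l1 H1] [[l2 H2] [C1 C2]]].
split; [|split; [|split]].
- eexists. apply is_derive_comp_slice1; eauto.
- eexists. apply is_derive_comp_slice2; eauto.
- apply (continuous_ext_loc _ (fun w => fx (g w) w * partial1 g w + fX (g w) w)).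
  + apply (filter_imp D); [|exact (D_open _ Hv)]. intros [X' Y'] Hw.
    destruct (Hg _ Hw) as [[l H] _]. symmetry. apply is_derive_unique.
    unfold partial1; simpl in H |- *. rewrite (is_derive_unique _ _ _ H).
    apply is_derive_comp_slice1; auto.
  + apply continuous_Rplus_comp; [apply continuous_Rmult_comp; [|exact C1]|];
      apply continuous_comp_jointly; auto.
- apply (continuous_ext_loc _ (fun w => fx (g w) w * partial2 g w + fY (g w) w)).
  + apply (filter_imp D); [|exact (D_open _ Hv)]. intros [X' Y'] Hw.
    destruct (Hg _ Hw) as [_ [[l H] _]]. symmetry. apply is_derive_unique.
    unfold partial2; simpl in H |- *. rewrite (is_derive_unique _ _ _ H).
    apply is_derive_comp_slice2; auto.
  + apply continuous_Rplus_comp; [apply continuous_Rmult_comp; [|exact C2]|];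
      apply continuous_comp_jointly; auto.
Qed.

End SmoothDependence.

Lemma C1_on_subset (D D' : R * R -> Prop) G :
  (forall p, D' p -> D p) -> C1_on D G -> C1_on D' G.
Proof. intros Hsub [H1 H2]; split; intros p Hp; [apply H1 | apply H2]; auto. Qed.

Lemma local_inverse_restrict (D E U0 V0 : R * R -> Prop) (F G : R * R -> R * R) p0 :
  open U0 -> open V0 -> U0 p0 -> V0 (F p0) ->
  (forall q, U0 q -> D q) -> (forall v, V0 v -> E v) ->
  (forall q, U0 q -> continuous F q) -> (forall v, V0 v -> continuous G v) ->
  (forall v, V0 v -> F (G v) = v) -> (forall q, U0 q -> V0 (F q) -> G (F q) = q) ->
  C1_on V0 G ->
  exists (U V : R * R -> Prop) (G : R * R -> R * R),
    open U /\ open V /\ U p0 /\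
    (forall q, U q -> D q) /\ (forall v, V v -> E v) /\
    (forall q, U q -> V (F q)) /\ (forall v, V v -> U (G v)) /\
    (forall q, U q -> G (F q) = q) /\ (forall v, V v -> F (G v) = v) /\
    C1_on V G.
Proof.
intros HU0 HV0 Hp0 HFp0 HUD HVE HF HG FG GF HC1.
exists (fun q => U0 q /\ V0 (F q)), (fun v => V0 v /\ U0 (G v)), G.
split; [|split; [|split; [|split; [|split; [|split; [|split; [|split; [|split]]]]]]]].
- intros q [Hq HFq]. apply filter_and; [exact (HU0 q Hq) | exact (HF q Hq _ (HV0 _ HFq))].
- intros v [Hv HGv]. apply filter_and; [exact (HV0 v Hv) | exact (HG v Hv _ (HU0 _ HGv))].
- split; [exact Hp0 | exact HFp0].
- intros q [Hq _]. auto.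
- intros v [Hv _]. auto.
- intros q [Hq HFq]. split; [exact HFq | rewrite GF; auto].
- intros v [Hv HGv]. split; [exact HGv | rewrite FG; auto].
- intros q [Hq HFq]. auto.
- intros v [Hv _]. auto.
- apply (C1_on_subset V0); [intros v [Hv _]; exact Hv | exact HC1].
Qed.

Lemma open_snd_neq0 : open (fun q : R * R => snd q <> 0).
Proof.
apply (open_comp snd (fun y => y <> 0)); [intros q _; apply continuous_snd_at | apply open_neq].
Qed.

Lemma pow2_sum_pos (a b : R) : a <> 0 \/ b <> 0 -> 0 < a ^ 2 + b ^ 2.
Proof.
intros [H|H].
- apply Rplus_lt_le_0_compat; [apply pow2_gt_0, H | apply pow2_ge_0].
- apply Rplus_le_lt_0_compat; [apply pow2_ge_0 | apply pow2_gt_0, H].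
Qed.

Section XYMap.
Variables (h u1 du1 u2 du2 : R -> R) (W X0 s : R).
Hypothesis h_cont : forall x, continuous h x.
Hypothesis u1_d : forall x, is_derive u1 x (du1 x).
Hypothesis du1_d : forall x, is_derive du1 x (- h x * u1 x).
Hypothesis u2_d : forall x, is_derive u2 x (du2 x).
Hypothesis du2_d : forall x, is_derive du2 x (- h x * u2 x).
Hypothesis W_wronskian : forall x, W = du1 x * u2 x - u1 x * du2 x.
Hypothesis W_neq0 : W <> 0.
Hypothesis s_sign : s = 1 \/ s = -1.

Let F := XY_map u1 du1 u2 du2 W X0 s.

Lemma u1_cont x : continuous u1 x.
Proof. apply (ex_derive_continuous u1). eexists; apply u1_d. Qed.
Lemma du1_cont x : continuous du1 x.
Proof. apply (ex_derive_continuous du1). eexists; apply du1_d. Qed.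
Lemma u2_cont x : continuous u2 x.
Proof. apply (ex_derive_continuous u2). eexists; apply u2_d. Qed.
Lemma du2_cont x : continuous du2 x.
Proof. apply (ex_derive_continuous du2). eexists; apply du2_d. Qed.

Ltac solve_ex_derive := first
  [ exact (ex_intro _ _ (u1_d _)) | exact (ex_intro _ _ (du1_d _))
  | exact (ex_intro _ _ (u2_d _)) | exact (ex_intro _ _ (du2_d _)) ].
Ltac rewrite_Derive := rewrite ?(is_derive_unique _ _ _ (u1_d _)),
  ?(is_derive_unique _ _ _ (du1_d _)), ?(is_derive_unique _ _ _ (u2_d _)),
  ?(is_derive_unique _ _ _ (du2_d _)).
Ltac solve_data_continuity := cbv beta; match goal with
  | |- continuous u1 _ => apply u1_cont
  | |- continuous du1 _ => apply du1_cont
  | |- continuous u2 _ => apply u2_cont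
  | |- continuous du2 _ => apply du2_cont
  | |- continuous h _ => apply h_cont
  end.
Ltac destruct_sign := destruct s_sign as [-> | ->].

Lemma u1_or_du1_neq0 x : u1 x <> 0 \/ du1 x <> 0.
Proof.
destruct (Req_dec (u1 x) 0) as [E|E]; [right | left; exact E].
intros E'. apply W_neq0. rewrite (W_wronskian x), E, E'. ring.
Qed.

Lemma u1_or_u2_neq0 x : u1 x <> 0 \/ u2 x <> 0.
Proof.
destruct (Req_dec (u1 x) 0) as [E|E]; [right | left; exact E].
intros E'. apply W_neq0. rewrite (W_wronskian x), E, E'. ring.
Qed.

Lemma wronskian_neq0 x : du1 x * u2 x - u1 x * du2 x <> 0.
Proof. rewrite <- W_wronskian. exact W_neq0. Qed.

Definition XY_den x P := P ^ 2 * u1 x ^ 2 + du1 x ^ 2.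
Definition XY_num x P := P ^ 2 * u1 x * u2 x + du1 x * du2 x.
Definition XY_den_dx x P := 2 * u1 x * du1 x * (P ^ 2 - h x).
Definition XY_num_dx x P := (P ^ 2 - h x) * (du1 x * u2 x + u1 x * du2 x).

Definition X_dx x P := s * / W *
  ((XY_num_dx x P * XY_den x P - XY_num x P * XY_den_dx x P) / XY_den x P ^ 2).
Definition X_dPhi x P := s * / W *
  ((2 * P * u1 x * u2 x * XY_den x P - XY_num x P * (2 * P * u1 x ^ 2)) / XY_den x P ^ 2).
Definition Y_dx x P := - P * XY_den_dx x P / XY_den x P ^ 2.
Definition Y_dPhi x P := (XY_den x P - P * (2 * P * u1 x ^ 2)) / XY_den x P ^ 2.

Lemma XY_den_pos x P : P <> 0 -> 0 < XY_den x P.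
Proof.
intros HP. unfold XY_den. replace (P ^ 2 * u1 x ^ 2) with ((P * u1 x) ^ 2) by ring.
apply pow2_sum_pos. destruct (u1_or_du1_neq0 x); [left | right; exact H].
apply Rmult_integral_contrapositive_currified; auto.
Qed.

Lemma XY_den_neq0 x P : P <> 0 -> XY_den x P <> 0.
Proof. intros HP. apply Rgt_not_eq, XY_den_pos, HP. Qed.

Lemma XY_map_eq x P :
  F (x, P) = (X0 + s * / W * (XY_num x P / XY_den x P), P / XY_den x P).
Proof. reflexivity. Qed.

Ltac XY_derive x P HP :=
  pose proof (XY_den_neq0 x P HP); unfold F, XY_map, X_dx, X_dPhi, Y_dx, Y_dPhi,
    XY_num, XY_num_dx, XY_den_dx, XY_den in *; simpl in *; auto_derive;
  [ repeat split; try solve_ex_derive; lra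
  | rewrite_Derive; field; repeat split; first [exact W_neq0 | lra] ].

Lemma is_derive_X_x x P : P <> 0 -> is_derive (fun t => fst (F (t, P))) x (X_dx x P).
Proof. intros HP. XY_derive x P HP. Qed.
Lemma is_derive_X_Phi x P : P <> 0 -> is_derive (fun t => fst (F (x, t))) P (X_dPhi x P).
Proof. intros HP. XY_derive x P HP. Qed.
Lemma is_derive_Y_x x P : P <> 0 -> is_derive (fun t => snd (F (t, P))) x (Y_dx x P).
Proof. intros HP. XY_derive x P HP. Qed.
Lemma is_derive_Y_Phi x P : P <> 0 -> is_derive (fun t => snd (F (x, t))) P (Y_dPhi x P).
Proof. intros HP. XY_derive x P HP. Qed.

Lemma partial1_X p : snd p <> 0 -> partial1 (fun q => fst (F q)) p = X_dx (fst p) (snd p).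
Proof. intros H. apply is_derive_unique, is_derive_X_x, H. Qed.
Lemma partial2_X p : snd p <> 0 -> partial2 (fun q => fst (F q)) p = X_dPhi (fst p) (snd p).
Proof. intros H. apply is_derive_unique, is_derive_X_Phi, H. Qed.
Lemma partial1_Y p : snd p <> 0 -> partial1 (fun q => snd (F q)) p = Y_dx (fst p) (snd p).
Proof. intros H. apply is_derive_unique, is_derive_Y_x, H. Qed.
Lemma partial2_Y p : snd p <> 0 -> partial2 (fun q => snd (F q)) p = Y_dPhi (fst p) (snd p).
Proof. intros H. apply is_derive_unique, is_derive_Y_Phi, H. Qed.

Ltac XY_field x P HP :=
  pose proof (XY_den_neq0 x P HP);
  unfold X_dx, X_dPhi, Y_dx, Y_dPhi, XY_num, XY_num_dx, XY_den_dx, XY_den in *;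
  destruct_sign; rewrite (W_wronskian x); field;
  repeat split; first [apply wronskian_neq0 | lra].

Lemma XY_gram_xx x P : P <> 0 ->
  X_dx x P * X_dx x P + Y_dx x P * Y_dx x P = (h x - P ^ 2) ^ 2 / XY_den x P ^ 2.
Proof. intros HP. XY_field x P HP. Qed.

Lemma XY_gram_xPhi x P : P <> 0 -> X_dx x P * X_dPhi x P + Y_dx x P * Y_dPhi x P = 0.
Proof. intros HP. XY_field x P HP. Qed.

Lemma XY_gram_PhiPhi x P : P <> 0 ->
  X_dPhi x P * X_dPhi x P + Y_dPhi x P * Y_dPhi x P = 1 / XY_den x P ^ 2.
Proof. intros HP. XY_field x P HP. Qed.

Lemma XY_pullback : pullback_eq (fun p => snd p <> 0) F g_H (g_h h).
Proof.
intros p HP v w. unfold g_H, g_h, dmap.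
rewrite partial1_X, partial2_X, partial1_Y, partial2_Y by exact HP.
destruct p as [x P]. cbn [fst snd] in HP |- *.
set (A := X_dx x P). set (B := X_dPhi x P). set (C := Y_dx x P). set (D := Y_dPhi x P).
replace ((A * fst v + B * snd v) * (A * fst w + B * snd w)
         + (C * fst v + D * snd v) * (C * fst w + D * snd w))
  with ((A * A + C * C) * (fst v * fst w) + (A * B + C * D) * (fst v * snd w + snd v * fst w)
        + (B * B + D * D) * (snd v * snd w)) by ring.
unfold A, B, C, D. rewrite XY_gram_xx, XY_gram_xPhi, XY_gram_PhiPhi by exact HP.
pose proof (XY_den_neq0 x P HP). rewrite XY_map_eq. simpl. field. auto.
Qed.

Lemma XY_den_continuous p : continuous (fun q => XY_den (fst q) (snd q)) p.
Proof. unfold XY_den. decompose_continuous; solve_data_continuity. Qed.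

Ltac XY_continuity := decompose_continuous; cbv beta; match goal with
  | |- continuous (fun q => XY_den (fst q) (snd q)) _ => apply XY_den_continuous
  | |- XY_den _ _ ^ _ <> 0 => apply pow_nonzero, XY_den_neq0; assumption
  | |- XY_den _ _ <> 0 => apply XY_den_neq0; assumption
  | |- _ => solve_data_continuity
  end.

Lemma XY_continuous q : snd q <> 0 -> continuous F q.
Proof.
intros Hq. apply (continuous_ext (fun q => (X0 + s * / W * (XY_num (fst q) (snd q) / XY_den (fst q) (snd q)),
  snd q / XY_den (fst q) (snd q)))); [intros [x P]; reflexivity|].
apply continuous_pair; unfold XY_num; XY_continuity.
Qed.

Lemma XY_C1 : C1_on (fun p => snd p <> 0) F.
Proof.
assert (Hloc : forall p, snd p <> 0 -> locally p (fun q => snd q <> 0))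
  by exact open_snd_neq0.
split; intros p Hp; (split; [|split; [|split]]).
- eexists; apply is_derive_X_x, Hp.
- eexists; apply is_derive_X_Phi, Hp.
- apply (continuous_ext_loc _ (fun q => X_dx (fst q) (snd q))).
  + apply (filter_imp _ _ (fun q Hq => eq_sym (partial1_X q Hq)) (Hloc p Hp)).
  + unfold X_dx, XY_num, XY_num_dx, XY_den_dx. XY_continuity.
- apply (continuous_ext_loc _ (fun q => X_dPhi (fst q) (snd q))).
  + apply (filter_imp _ _ (fun q Hq => eq_sym (partial2_X q Hq)) (Hloc p Hp)).
  + unfold X_dPhi, XY_num. XY_continuity.
- eexists; apply is_derive_Y_x, Hp.
- eexists; apply is_derive_Y_Phi, Hp.
- apply (continuous_ext_loc _ (fun q => Y_dx (fst q) (snd q))).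
  + apply (filter_imp _ _ (fun q Hq => eq_sym (partial1_Y q Hq)) (Hloc p Hp)).
  + unfold Y_dx, XY_den_dx. XY_continuity.
- apply (continuous_ext_loc _ (fun q => Y_dPhi (fst q) (snd q))).
  + apply (filter_imp _ _ (fun q Hq => eq_sym (partial2_Y q Hq)) (Hloc p Hp)).
  + unfold Y_dPhi. XY_continuity.
Qed.

(* With [zeta = zeta_re X + i zeta_im Y], solving the Moebius relation gives
   [Phi = i (zeta u1' - u2') / (zeta u1 - u2)].  The real and imaginary parts of this
   quotient are [Phi_of x (X, Y)] and [- reality_eq x (X, Y) / inv_den x (X, Y)]. *)
Definition zeta_re X := s * W * (X - X0).
Definition zeta_im Y := W * Y.

Definition reality_eq x (v : R * R) :=
  - (u1 x * du1 x) * (zeta_re (fst v) ^ 2 + zeta_im (snd v) ^ 2)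
  + (u1 x * du2 x + u2 x * du1 x) * zeta_re (fst v) - u2 x * du2 x.
Definition reality_eq_dx x (v : R * R) :=
  - (du1 x ^ 2 - h x * u1 x ^ 2) * (zeta_re (fst v) ^ 2 + zeta_im (snd v) ^ 2)
  + 2 * (du1 x * du2 x - h x * u1 x * u2 x) * zeta_re (fst v) - (du2 x ^ 2 - h x * u2 x ^ 2).
Definition reality_eq_dX x (v : R * R) :=
  (- (u1 x * du1 x) * (2 * zeta_re (fst v)) + (u1 x * du2 x + u2 x * du1 x)) * (s * W).
Definition reality_eq_dY x (v : R * R) := - (u1 x * du1 x) * (2 * zeta_im (snd v)) * W.

Definition inv_den x (v : R * R) :=
  (u2 x - u1 x * zeta_re (fst v)) ^ 2 + u1 x ^ 2 * zeta_im (snd v) ^ 2.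
Definition Phi_of x (v : R * R) := W * zeta_im (snd v) / inv_den x v.
Definition Phi_of_dx x (v : R * R) := - (W * zeta_im (snd v)) *
  (2 * (u2 x - u1 x * zeta_re (fst v)) * (du2 x - du1 x * zeta_re (fst v))
   + 2 * u1 x * du1 x * zeta_im (snd v) ^ 2) / inv_den x v ^ 2.
Definition Phi_of_dX x (v : R * R) := - (W * zeta_im (snd v)) *
  (2 * (u2 x - u1 x * zeta_re (fst v)) * (- u1 x * (s * W))) / inv_den x v ^ 2.
Definition Phi_of_dY x (v : R * R) := (W * W * inv_den x v
  - W * zeta_im (snd v) * (2 * u1 x ^ 2 * zeta_im (snd v) * W)) / inv_den x v ^ 2.

Lemma inv_den_pos x v : snd v <> 0 -> 0 < inv_den x v.
Proof.
intros Hv. unfold inv_den. replace (u1 x ^ 2 * zeta_im (snd v) ^ 2)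
  with ((u1 x * zeta_im (snd v)) ^ 2) by ring.
apply pow2_sum_pos. destruct (Req_dec (u1 x) 0) as [E|E].
- left. rewrite E, Rmult_0_l, Rminus_0_r.
  destruct (u1_or_u2_neq0 x) as [H|H]; [contradiction | exact H].
- right. unfold zeta_im. repeat apply Rmult_integral_contrapositive_currified; auto.
Qed.

Lemma inv_den_neq0 x v : snd v <> 0 -> inv_den x v <> 0.
Proof. intros Hv. apply Rgt_not_eq, inv_den_pos, Hv. Qed.

Lemma is_derive_reality_x x v : is_derive (fun y => reality_eq y v) x (reality_eq_dx x v).
Proof.
unfold reality_eq. auto_derive; [repeat split; solve_ex_derive|].
rewrite_Derive. unfold reality_eq_dx. ring.
Qed.
Lemma is_derive_reality_X x v :
  is_derive (fun t => reality_eq x (t, snd v)) (fst v) (reality_eq_dX x v).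
Proof.
destruct v as [X Y]. unfold reality_eq, reality_eq_dX, zeta_re; simpl.
auto_derive; [exact I | ring].
Qed.
Lemma is_derive_reality_Y x v :
  is_derive (fun t => reality_eq x (fst v, t)) (snd v) (reality_eq_dY x v).
Proof.
destruct v as [X Y]. unfold reality_eq, reality_eq_dY, zeta_im; simpl.
auto_derive; [exact I | ring].
Qed.

Ltac Phi_of_derive x v Hv :=
  pose proof (inv_den_neq0 x v Hv); destruct v as [X Y];
  unfold Phi_of, Phi_of_dx, Phi_of_dX, Phi_of_dY, inv_den, zeta_re, zeta_im in *;
  simpl in *; auto_derive;
  [ repeat split; try solve_ex_derive; lra | rewrite_Derive; field; lra ].

Lemma is_derive_Phi_of_x x v : snd v <> 0 ->
  is_derive (fun y => Phi_of y v) x (Phi_of_dx x v).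
Proof. intros Hv. Phi_of_derive x v Hv. Qed.
Lemma is_derive_Phi_of_X x v : snd v <> 0 ->
  is_derive (fun t => Phi_of x (t, snd v)) (fst v) (Phi_of_dX x v).
Proof. intros Hv. Phi_of_derive x v Hv. Qed.
Lemma is_derive_Phi_of_Y x v : snd v <> 0 ->
  is_derive (fun t => Phi_of x (fst v, t)) (snd v) (Phi_of_dY x v).
Proof. intros Hv. Phi_of_derive x v Hv. Qed.

Lemma inv_den_jcont x v : jointly_continuous inv_den x v.
Proof.
unfold jointly_continuous, inv_den, zeta_re, zeta_im. decompose_continuous; solve_data_continuity.
Qed.

Ltac inverse_continuity := unfold jointly_continuous; decompose_continuous; cbv beta;
  match goal with
  | |- continuous (fun q => inv_den (fst q) (snd q)) _ => apply inv_den_jcont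
  | |- inv_den _ _ ^ _ <> 0 => apply pow_nonzero, inv_den_neq0; assumption
  | |- inv_den _ _ <> 0 => apply inv_den_neq0; assumption
  | |- _ => solve_data_continuity
  end.

Lemma reality_eq_jcont x v : jointly_continuous reality_eq x v.
Proof. unfold reality_eq, zeta_re, zeta_im. inverse_continuity. Qed.
Lemma reality_eq_dx_jcont x v : jointly_continuous reality_eq_dx x v.
Proof. unfold reality_eq_dx, zeta_re, zeta_im. inverse_continuity. Qed.
Lemma reality_eq_dX_jcont x v : jointly_continuous reality_eq_dX x v.
Proof. unfold reality_eq_dX, zeta_re. inverse_continuity. Qed.
Lemma reality_eq_dY_jcont x v : jointly_continuous reality_eq_dY x v.
Proof. unfold reality_eq_dY, zeta_im. inverse_continuity. Qed.

Lemma Phi_of_jcont x v : snd v <> 0 -> jointly_continuous Phi_of x v.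
Proof. intros Hv. unfold Phi_of, zeta_im. inverse_continuity. Qed.
Lemma Phi_of_dx_jcont x v : snd v <> 0 -> jointly_continuous Phi_of_dx x v.
Proof. intros Hv. unfold Phi_of_dx, zeta_re, zeta_im. inverse_continuity. Qed.
Lemma Phi_of_dX_jcont x v : snd v <> 0 -> jointly_continuous Phi_of_dX x v.
Proof. intros Hv. unfold Phi_of_dX, zeta_re, zeta_im. inverse_continuity. Qed.
Lemma Phi_of_dY_jcont x v : snd v <> 0 -> jointly_continuous Phi_of_dY x v.
Proof. intros Hv. unfold Phi_of_dY, zeta_im. inverse_continuity. Qed.

Ltac inverse_field x P HP :=
  pose proof (XY_den_neq0 x P HP); rewrite XY_map_eq;
  unfold reality_eq, reality_eq_dx, inv_den, zeta_re, zeta_im, XY_num, XY_den in *;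
  cbn [fst snd];
  destruct_sign; rewrite (W_wronskian x); field;
  repeat split; first [apply wronskian_neq0 | lra].

Lemma reality_eq_XY x P : P <> 0 -> reality_eq x (F (x, P)) = 0.
Proof. intros HP. inverse_field x P HP. Qed.

Lemma inv_den_XY x P : P <> 0 -> inv_den x (F (x, P)) = W ^ 2 / XY_den x P.
Proof. intros HP. inverse_field x P HP. Qed.

Lemma reality_eq_dx_XY x P : P <> 0 ->
  reality_eq_dx x (F (x, P)) = (h x - P ^ 2) * W ^ 2 / XY_den x P.
Proof. intros HP. inverse_field x P HP. Qed.

Lemma Phi_of_XY x P : P <> 0 -> Phi_of x (F (x, P)) = P.
Proof.
intros HP. pose proof (XY_den_neq0 x P HP).
unfold Phi_of. rewrite inv_den_XY by exact HP.
rewrite XY_map_eq. unfold zeta_im. cbn [snd]. field. auto.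
Qed.

Lemma reality_eq_decomp1 x v :
  reality_eq x v * (u2 x - u1 x * zeta_re (fst v)) + W * u1 x * zeta_im (snd v) ^ 2
  = inv_den x v * (du1 x * zeta_re (fst v) - du2 x).
Proof. unfold reality_eq, inv_den. rewrite (W_wronskian x). ring. Qed.

Lemma reality_eq_decomp2 x v :
  - reality_eq x v * u1 x * zeta_im (snd v) + W * zeta_im (snd v) * (u2 x - u1 x * zeta_re (fst v))
  = inv_den x v * du1 x * zeta_im (snd v).
Proof. unfold reality_eq, inv_den. rewrite (W_wronskian x). ring. Qed.

Lemma XY_Phi_of x v : snd v <> 0 -> reality_eq x v = 0 -> F (x, Phi_of x v) = v.
Proof.
intros Hv Hr. pose proof (inv_den_pos x v Hv) as HD.
pose proof (reality_eq_decomp1 x v) as R1. pose proof (reality_eq_decomp2 x v) as R2.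
rewrite Hr in R1, R2.
destruct v as [X Y]. cbn [fst snd] in *.
set (a := zeta_re X) in *. set (b := zeta_im Y) in *.
set (D := inv_den x (X, Y)) in *. set (P := Phi_of x (X, Y)).
assert (Hb : b <> 0) by (apply Rmult_integral_contrapositive_currified; auto).
assert (HPD : P * D = W * b) by (unfold P, Phi_of; cbn [snd]; fold b D; field; lra).
assert (E1 : du1 x * a - du2 x = u1 x * b * P).
{ apply Rmult_eq_reg_l with D; [|lra].
  transitivity (u1 x * b * (P * D)); [rewrite HPD; lra | ring]. }
assert (E2 : P * (u2 x - u1 x * a) = du1 x * b).
{ apply Rmult_eq_reg_l with (D * b); [|apply Rmult_integral_contrapositive_currified; lra].
  transitivity (b * ((P * D) * (u2 x - u1 x * a))); [ring|]. rewrite HPD.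
  replace (W * b * (u2 x - u1 x * a)) with (D * du1 x * b) by lra. ring. }
assert (HP : P <> 0).
{ intros E. rewrite E, Rmult_0_l in HPD. apply Hb.
  apply Rmult_eq_reg_l with W; [lra | exact W_neq0]. }
pose proof (XY_den_pos x P HP) as Hden.
assert (EN : XY_num x P = a * XY_den x P).
{ unfold XY_num, XY_den.
  transitivity (P * u1 x * (P * (u2 x - u1 x * a)) - du1 x * (du1 x * a - du2 x)
                + a * (P ^ 2 * u1 x ^ 2 + du1 x ^ 2)); [ring|].
  rewrite E1, E2. ring. }
assert (EW : W * P = b * XY_den x P).
{ unfold XY_den. rewrite (W_wronskian x).
  transitivity (du1 x * (P * (u2 x - u1 x * a)) + u1 x * P * (du1 x * a - du2 x)); [ring|].
  rewrite E1, E2. ring. }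
rewrite XY_map_eq, EN. f_equal.
- unfold a, zeta_re. destruct_sign; field; repeat split; first [exact W_neq0 | lra].
- apply Rmult_eq_reg_l with W; [|exact W_neq0].
  unfold Rdiv. rewrite <- Rmult_assoc, EW. unfold b, zeta_im. field. lra.
Qed.

Lemma H0_open : open (H0_set h).
Proof.
apply open_and.
- apply (open_comp snd (fun y => 0 < y)); [intros q _; apply continuous_snd_at | apply open_gt].
- apply (open_ext (fun q => snd q ^ 2 - h (fst q) <> 0)); [intros [x P]; cbn [fst snd]; split; intros H E; apply H; lra|].
  apply (open_comp (fun q => snd q ^ 2 - h (fst q)) (fun y => y <> 0)); [|apply open_neq].
  intros q _. change (continuous (fun q => snd q ^ 2 - h (fst q)) q).
  decompose_continuous; solve_data_continuity.
Qed.

Lemma XY_inverse_branch x0 P0 : H0_set h (x0, P0) ->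
  exists d r (g : R * R -> R), 0 < d /\ 0 < r /\
    (forall q, ball (x0, P0) d q -> H0_set h q) /\
    forall v, ball (F (x0, P0)) r v ->
      0 < snd v /\ Rabs (g v - x0) < d /\ reality_eq (g v) v = 0 /\
      reality_eq_dx (g v) v <> 0 /\
      (forall x, Rabs (x - x0) < d -> reality_eq x v = 0 -> x = g v) /\ continuous g v.
Proof.
intros Hp0. destruct Hp0 as [HP0 HhP0]. cbn [fst snd] in HP0, HhP0.
set (v1 := F (x0, P0)).
assert (HPne : P0 <> 0) by lra.
(* Scaling by [c] makes the x-derivative at the base point positive. *)
set (c := reality_eq_dx x0 v1).
assert (Hc : c <> 0).
{ unfold c, v1. rewrite reality_eq_dx_XY by exact HPne. pose proof (XY_den_pos x0 P0 HPne).
  apply Rmult_integral_contrapositive_currified;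
    [apply Rmult_integral_contrapositive_currified; [lra | apply pow_nonzero, W_neq0] |].
  apply Rinv_neq_0_compat. lra. }
destruct (H0_open (x0, P0) (conj HP0 HhP0)) as [d0 Hd0].
destruct (implicit_function (fun x v => c * reality_eq x v) (fun x v => c * reality_eq_dx x v))
  with x0 v1 d0 as [d [r [g [[Hd Hdd0] [Hr Hg]]]]].
- intros x v. apply is_derive_scal, is_derive_reality_x.
- intros x v. apply jointly_continuous_scal, reality_eq_jcont.
- intros x v. apply jointly_continuous_scal, reality_eq_dx_jcont.
- unfold v1. rewrite reality_eq_XY by exact HPne. ring.
- fold c. apply Rsqr_pos_lt, Hc.
- apply cond_pos.
- assert (HY1 : 0 < snd v1).
  { unfold v1. rewrite XY_map_eq. apply Rdiv_lt_0_compat; [lra | apply XY_den_pos, HPne]. }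
  exists d, (Rmin r (snd v1)), g. split; [exact Hd|]. split; [apply Rmin_glb_lt; auto|]. split.
  + intros q Hq. apply Hd0. exact (ball_le _ _ _ Hdd0 _ Hq).
  + intros [X Y] Hv. pose proof (proj1 (ball_R2 _ _ _) Hv) as [_ Hv2]. cbn [snd] in Hv2 |- *.
    apply Rmin_Rgt in Hv2. destruct Hv2 as [_ Hv2].
    destruct (Hg (X, Y) (ball_le _ _ _ (Rmin_l _ _) _ Hv)) as [Hgx [Hroot [Hpos [Huniq Hgc]]]].
    split; [apply Rabs_def2 in Hv2; lra|]. split; [exact Hgx|].
    split; [apply (Rmult_eq_reg_l c); [rewrite Hroot; ring | exact Hc]|].
    split; [intros E; rewrite E, Rmult_0_r in Hpos; lra|].
    split; [|exact Hgc].
    intros x Hx E. apply Huniq; [exact Hx | rewrite E; ring].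
Qed.

Lemma XY_inverse_branch_C1 (V0 : R * R -> Prop) (g : R * R -> R) : open V0 ->
  (forall v, V0 v -> 0 < snd v /\ reality_eq (g v) v = 0 /\ reality_eq_dx (g v) v <> 0 /\
                     continuous g v) ->
  C1_on V0 (fun v => (g v, Phi_of (g v) v)).
Proof.
intros HV0 Hg.
assert (Hne : forall v, V0 v -> snd v <> 0) by (intros v Hv; apply Rgt_not_eq, Hg, Hv).
assert (Hgc : forall v, V0 v -> continuous g v) by (intros v Hv; apply Hg, Hv).
assert (HgC1 : C1_fun_on V0 g).
{ exact (C1_implicit V0 reality_eq reality_eq_dx reality_eq_dX reality_eq_dY g HV0
    (fun x v _ => is_derive_reality_x x v) (fun x v _ => is_derive_reality_X x v)
    (fun x v _ => is_derive_reality_Y x v) (fun x v _ => reality_eq_dx_jcont x v)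
    (fun x v _ => reality_eq_dX_jcont x v) (fun x v _ => reality_eq_dY_jcont x v)
    Hgc (fun v Hv => proj1 (proj2 (Hg v Hv))) (fun v Hv => proj1 (proj2 (proj2 (Hg v Hv))))). }
split; [exact HgC1|].
exact (C1_comp_jointly V0 Phi_of Phi_of_dx Phi_of_dX Phi_of_dY g HV0
  (fun x v Hv => is_derive_Phi_of_x x v (Hne v Hv))
  (fun x v Hv => is_derive_Phi_of_X x v (Hne v Hv))
  (fun x v Hv => is_derive_Phi_of_Y x v (Hne v Hv))
  (fun x v Hv => Phi_of_dx_jcont x v (Hne v Hv))
  (fun x v Hv => Phi_of_dX_jcont x v (Hne v Hv))
  (fun x v Hv => Phi_of_dY_jcont x v (Hne v Hv)) Hgc HgC1).
Qed.

Lemma XY_local_inverse p0 : H0_set h p0 ->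
  exists (U V : R * R -> Prop) (G : R * R -> R * R),
    open U /\ open V /\ U p0 /\
    (forall q, U q -> H0_set h q) /\ (forall v, V v -> H_set v) /\
    (forall q, U q -> V (F q)) /\ (forall v, V v -> U (G v)) /\
    (forall q, U q -> G (F q) = q) /\ (forall v, V v -> F (G v) = v) /\
    C1_on V G.
Proof.
destruct p0 as [x0 P0]. intros Hp0.
destruct (XY_inverse_branch x0 P0 Hp0) as [d [r [g [Hd [Hr [HU0 Hg]]]]]].
set (V0 := ball (F (x0, P0)) r).
assert (Hsnd : forall v, V0 v -> 0 < snd v) by (intros v Hv; apply (Hg v Hv)).
assert (Hgc : forall v, V0 v -> continuous g v) by (intros v Hv; apply (Hg v Hv)).
apply (local_inverse_restrict _ _ (ball (x0, P0) d) V0 F (fun v => (g v, Phi_of (g v) v))).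
- apply open_ball_R2.
- apply open_ball_R2.
- exact (ball_center (x0, P0) (mkposreal d Hd)).
- exact (ball_center (F (x0, P0)) (mkposreal r Hr)).
- exact HU0.
- exact Hsnd.
- intros [x P] Hq. apply XY_continuous. destruct (HU0 _ Hq) as [HP _]. cbn [snd] in *. lra.
- intros v Hv. apply continuous_pair; [apply Hgc, Hv|].
  apply continuous_comp_jointly; [apply Hgc, Hv | apply Phi_of_jcont, Rgt_not_eq, Hsnd, Hv].
- intros v Hv. apply XY_Phi_of; [apply Rgt_not_eq, Hsnd, Hv | apply (Hg v Hv)].
- intros [x P] Hq HFq. destruct (Hg _ HFq) as [_ [_ [_ [_ [Huniq _]]]]].
  assert (HP : P <> 0) by (destruct (HU0 _ Hq) as [HP _]; cbn [snd] in HP; lra).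
  assert (Ex : x = g (F (x, P))).
  { apply Huniq; [exact (proj1 (proj1 (ball_R2 _ _ _) Hq)) | apply reality_eq_XY, HP]. }
  rewrite <- Ex, Phi_of_XY by exact HP. reflexivity.
- apply XY_inverse_branch_C1; [apply open_ball_R2|].
  intros v Hv. destruct (Hg v Hv) as [H1 [_ [H3 [H4 [_ H6]]]]]. auto.
Qed.

Lemma XY_maps_into_H p : H0_set h p -> H_set (F p).
Proof.
destruct p as [x P]. intros [HP _]. cbn [snd] in HP. unfold H_set.
rewrite XY_map_eq. apply Rdiv_lt_0_compat; [lra | apply XY_den_pos; lra].
Qed.

End XYMap.

Theorem lemma2p14
  (h : R -> R) (u1 du1 u2 du2 : R -> R) (W X0 s : R)
  (Hh : forall x, continuous h x)
  (Hu1 : forall x, is_derive u1 x (du1 x))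
  (Hdu1 : forall x, is_derive du1 x (- h x * u1 x))
  (Hu2 : forall x, is_derive u2 x (du2 x))
  (Hdu2 : forall x, is_derive du2 x (- h x * u2 x))
  (Hind : forall a b : R, (forall x, a * u1 x + b * u2 x = 0) -> a = 0 /\ b = 0)
  (HW : forall x, W = du1 x * u2 x - u1 x * du2 x)
  (HW0 : W <> 0)
  (Hs : s = 1 \/ s = -1) :
  local_diffeo (H0_set h) H_set (XY_map u1 du1 u2 du2 W X0 s) /\
  pullback_eq (H0_set h) (XY_map u1 du1 u2 du2 W X0 s) g_H (g_h h).
Proof.
assert (Hsnd : forall p, H0_set h p -> snd p <> 0) by (intros p [Hp _]; lra).
split; [split; [|split]|].
- intros p Hp. eapply XY_maps_into_H; eauto.
- apply (C1_on_subset (fun p => snd p <> 0)); [exact Hsnd|]. eapply XY_C1; eauto.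
- intros p Hp. eapply XY_local_inverse; eauto.
- intros p Hp. eapply XY_pullback; eauto.
Qed.
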